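(* Let $T(z)=\dfrac{az+b}{cz+d}$ with $a,c\in\mathbb{C}\setminus\{0\}$, $b,d\in\mathbb{C}$ and $ad-bc=1$. Then $z=-b/a$ is a superattracting fixed point of $St_T$, the finite extraneous fixed points $z_e=\dfrac{(a-2d)\pm\sqrt{a^2-4}}{2c}$ are rationally indifferent fixed points of $St_T$, and $\infty$ is a superattracting fixed point of $St_T$.
   Context: For a non-constant rational function $f$, Stirling's iterative root-finding method is $St_f(z)=z-\dfrac{f(z)}{f'\big(z-f(z)\big)}$, regarded as a rational self-map of $\widehat{\mathbb{C}}$. An extraneous fixed point of $St_f$ is a fixed point which is not a zero of $f$. Superattracting means multiplier $0$; rationally indifferent means multiplier $e^{2\pi i\theta}$ with $\theta\in\mathbb{Q}$; the multiplier at $\infty$ of a rational map $F$ is $G'(0)$ with $G(z)=1/F(1/z)$. *)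

From HB Require Import structures.
From mathcomp Require Import all_boot all_order all_algebra.
From mathcomp Require Import complex.
From mathcomp Require Import reals trigo.
Set Implicit Arguments.
Unset Strict Implicit.
Unset Printing Implicit Defensive.
Import Order.TTheory GRing.Theory Num.Theory.
Local Open Scope ring_scope.

(* Rational functions over a field K, represented as (numerator,      *)
(* denominator) pairs of polynomials; the rational map of the Riemann *)
(* sphere they define is obtained after cancelling the gcd.           *)
Section RatFun.
Variable K : fieldType.

Definition ratfun := ({poly K} * {poly K})%type.

Definition rf_id : ratfun := ('X, 1).

Definition rf_sub (f g : ratfun) : ratfun :=
  (f.1 * g.2 - g.1 * f.2, f.2 * g.2).

Definition rf_div (f g : ratfun) : ratfun := (f.1 * g.2, f.2 * g.1).

Definition rf_deriv (f : ratfun) : ratfun :=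
  (f.1^`() * f.2 - f.1 * f.2^`(), f.2 ^+ 2).

(* composition f o g : with f = p/q, N = max(deg p, deg q), g = r/s,
   f(g) = (sum_i p_i r^i s^(N-i)) / (sum_i q_i r^i s^(N-i)) *)
Definition rf_comp (f g : ratfun) : ratfun :=
  let N := (maxn (size f.1) (size f.2)).-1 in
  (\sum_(i < size f.1) f.1`_i *: (g.1 ^+ i * g.2 ^+ (N - i)),
   \sum_(i < size f.2) f.2`_i *: (g.1 ^+ i * g.2 ^+ (N - i))).

Definition rf_reduce (f : ratfun) : ratfun :=
  (f.1 %/ gcdp f.1 f.2, f.2 %/ gcdp f.1 f.2).

(* value at a finite point z, as a point of the Riemann sphere
   (None = infinity) *)
Definition rf_eval (f : ratfun) (z : K) : option K :=
  let g := rf_reduce f in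
  if g.2.[z] == 0 then None else Some (g.1.[z] / g.2.[z]).

Definition rf_inv : ratfun := (1, 'X).

(* G(z) = 1 / F(1/z), the conjugate of F by z |-> 1/z, used at infinity *)
Definition rf_at_inf (f : ratfun) : ratfun := rf_comp rf_inv (rf_comp f rf_inv).

Definition rf_fixed (f : ratfun) (z : K) : Prop := rf_eval f z = Some z.

(* multiplier at a finite point z (meaningful when f(z) is finite):
   the derivative of the (reduced) rational function at z *)
Definition rf_mult (f : ratfun) (z : K) : K :=
  let d := rf_deriv (rf_reduce f) in d.1.[z] / d.2.[z].

Definition rf_fixed_inf (f : ratfun) : Prop := rf_fixed (rf_at_inf f) 0.
Definition rf_mult_inf (f : ratfun) : K := rf_mult (rf_at_inf f) 0.

Definition rf_zero (f : ratfun) (z : K) : Prop := rf_eval f z = Some 0.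

Definition stirling (f : ratfun) : ratfun :=
  rf_sub rf_id (rf_div f (rf_comp (rf_deriv f) (rf_sub rf_id f))).

Definition moebius (a b c d : K) : ratfun :=
  (a%:P * 'X + b%:P, c%:P * 'X + d%:P).

End RatFun.

Section Cplx.
Variable R : realType.
Local Notation C := R[i].

Definition expi2pi (theta : rat) : C :=
  Complex (cos (2 * pi * ratr theta)) (sin (2 * pi * ratr theta)).

Definition superattracting_fixed (f : ratfun C) (z : C) : Prop :=
  rf_fixed f z /\ rf_mult f z = 0.

Definition superattracting_fixed_inf (f : ratfun C) : Prop :=
  rf_fixed_inf f /\ rf_mult_inf f = 0.

Definition rationally_indifferent_fixed (f : ratfun C) (z : C) : Prop :=
  rf_fixed f z /\ exists theta : rat, rf_mult f z = expi2pi theta.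

Definition extraneous_fixed (f : ratfun C) (z : C) : Prop :=
  rf_fixed (stirling f) z /\ ~ rf_zero f z.

End Cplx.

(* With T = num / den, the condition ad - bc = 1 makes T' = 1 / den^2, and
   c (z - T z) + d = Q / den with Q = den^2 - c num; hence
   St_T(z) = z - num Q^2 / den^3.  Its finite fixed points are the zeros of
   num, where den = 1/a and St_T' = 1 - a Q^2 / den^3 = 0, and the zeros of Q,
   which are double zeros of num Q^2, so St_T' = 1 there.  Completing the
   square, 4 Q(z) = (2cz - (a - 2d))^2 - (a^2 - 4).  At infinity the
   numerator of St_T has degree 5 and its denominator degree 3, so
   1 / St_T(1 / w) vanishes to second order at w = 0. *)

From HB Require Import structures.
From mathcomp Require Import all_boot all_order all_algebra.
From mathcomp Require Import complex.
From mathcomp Require Import reals trigo.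
From mathcomp Require Import ring zify.
Import Order.TTheory GRing.Theory Num.Theory.
Local Open Scope ring_scope.

Set Implicit Arguments.
Unset Strict Implicit.
Unset Printing Implicit Defensive.

Section RationalMaps.
Variable K : fieldType.
Implicit Types (p q u v N D P S : {poly K}) (z : K).

Lemma size_exp_neq0 p n : p != 0 -> size (p ^+ n) = ((size p).-1 * n).+1.
Proof. by move=> nz_p; rewrite polySpred ?expf_neq0 // size_exp. Qed.

Lemma size_linear (k1 k0 : K) : k1 != 0 -> size (k1%:P * 'X + k0%:P) = 2.
Proof. by move=> nz_k1; rewrite size_MXaddC polyC_eq0 (negbTE nz_k1) size_polyC nz_k1. Qed.

Lemma rf_reduceK p q :
  (rf_reduce (p, q)).1 * gcdp p q = p /\ (rf_reduce (p, q)).2 * gcdp p q = q.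
Proof. by rewrite !divpK ?dvdp_gcdl ?dvdp_gcdr. Qed.

Lemma rf_eval_nonpole p q z : q.[z] != 0 -> rf_eval (p, q) z = Some (p.[z] / q.[z]).
Proof.
rewrite /rf_eval; have [] := rf_reduceK p q.
case: (rf_reduce _) (gcdp p q) => p1 q1 g /= <- <-.
rewrite !hornerM mulf_eq0 negb_or => /andP[nz_q nz_g].
by rewrite (negbTE nz_q); congr Some; field; rewrite nz_q nz_g.
Qed.

Lemma rf_mult_nonpole p q z : q.[z] != 0 ->
  rf_mult (p, q) z = (p^`().[z] * q.[z] - p.[z] * q^`().[z]) / q.[z] ^+ 2.
Proof.
rewrite /rf_mult /rf_deriv; have [] := rf_reduceK p q.
case: (rf_reduce _) (gcdp p q) => p1 q1 g /= <- <-.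
rewrite !hornerM mulf_eq0 negb_or => /andP[nz_q nz_g].
by rewrite !derivM !(hornerD, hornerN, hornerM, horner_exp); field; rewrite nz_q nz_g.
Qed.

Lemma rf_eval_pole p q z : q.[z] = 0 -> p.[z] != 0 -> rf_eval (p, q) z = None.
Proof.
rewrite /rf_eval; have [] := rf_reduceK p q.
case: (rf_reduce _) (gcdp p q) => p1 q1 g /= <- <-.
rewrite !hornerM => /eqP; rewrite mulf_eq0 => /orP[/eqP-> | /eqP->].
  by rewrite eqxx.
by rewrite mulr0 eqxx.
Qed.

Lemma rf_fixed_id_subP D N z : D.[z] != 0 -> rf_fixed ('X * D - N, D) z <-> N.[z] = 0.
Proof.
move=> nzD; rewrite /rf_fixed rf_eval_nonpole // hornerD hornerN hornerM hornerX.
have -> : (z * D.[z] - N.[z]) / D.[z] = z - N.[z] / D.[z] by field.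
split=> [[/eqP] | ->]; last by rewrite mul0r subr0.
by rewrite subr_eq addrC -subr_eq subrr eq_sym mulf_eq0 invr_eq0 (negbTE nzD) orbF => /eqP.
Qed.

Lemma rf_mult_id_sub D N z : D.[z] != 0 -> N.[z] = 0 ->
  rf_mult ('X * D - N, D) z = 1 - N^`().[z] / D.[z].
Proof.
move=> nzD N0; rewrite rf_mult_nonpole // !derivE.
by rewrite !(hornerD, hornerN, hornerM, hornerX, hornerC) N0; field.
Qed.

Lemma rf_eval_id_sub_pole D N z : D.[z] = 0 -> N.[z] != 0 -> rf_eval ('X * D - N, D) z = None.
Proof.
move=> D0 nzN; apply: rf_eval_pole => //.
by rewrite hornerD hornerN hornerM D0 mulr0 sub0r oppr_eq0.
Qed.

Lemma horner_deriv_mul_sqr p q z :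
  ((p * q ^+ 2)^`()).[z] = p^`().[z] * q.[z] ^+ 2 + p.[z] * (q.[z] * q^`().[z]) *+ 2.
Proof. by rewrite derivM deriv_exp !hornerE /=; ring. Qed.

Lemma rf_comp_inv u v : rf_comp (rf_inv K) (u, v) = (v, u).
Proof.
rewrite /rf_comp /rf_inv /= size_poly1 size_polyX /=.
rewrite big_ord1 !big_ord_recr big_ord0 /= !coefE /=.
by rewrite scale1r scale0r !add0r scale1r !expr0 !mul1r expr1 mulr1.
Qed.

Lemma coef_sum_scaleXn p n m k :
  (\sum_(i < n) p`_i *: (1 ^+ i * 'X^(m - i)))`_k = \sum_(i < n) p`_i *+ (k == m - i)%N.
Proof.
rewrite coef_sum; apply: eq_bigr => i _.
by rewrite coefZ expr1n mul1r coefXn mulr_natr.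
Qed.

Lemma rf_inf_superattracting P S :
  ((size S).+2 <= size P)%N -> rf_fixed_inf (P, S) /\ rf_mult_inf (P, S) = 0.
Proof.
case sizeP: (size P) => [//|n] ltSP.
rewrite /rf_fixed_inf /rf_mult_inf /rf_at_inf [rf_comp (P, S) _]surjective_pairing.
rewrite rf_comp_inv /rf_comp /= sizeP (maxn_idPl (ltnW (ltnW ltSP))) /=.
set U := \sum_(i < n.+1) _; set V := \sum_(i < size S) _.
have U0 : U`_0 = lead_coef P.
  rewrite /U coef_sum_scaleXn big_ord_recr /= subnn eqxx lead_coefE sizeP.
  rewrite big1 ?add0r // => i _; rewrite eq_sym subn_eq0 leqNgt ltn_ord //.
have V_small k : (k <= 1)%N -> V`_k = 0.
  move=> le_k1; rewrite /V coef_sum_scaleXn big1 // => -[i lti] _ /=.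
  by rewrite (_ : (k == n - i)%N = false) //; apply/eqP; lia.
have nzU : U.[0] != 0 by rewrite horner_coef0 U0 lead_coef_eq0 -size_poly_eq0 sizeP.
rewrite /rf_fixed rf_eval_nonpole // rf_mult_nonpole // !horner_coef0 coef_deriv.
by rewrite !V_small // mul0rn !mul0r subr0 mul0r.
Qed.

End RationalMaps.

Section MoebiusStirling.
Variables (K : fieldType) (a b c d : K).
Hypotheses (nz_c : c != 0) (det1 : a * d - b * c = 1).

Local Notation num := (a%:P * 'X + b%:P).
Local Notation den := (c%:P * 'X + d%:P).
Local Notation Q := (den ^+ 2 - c%:P * num).

Lemma size_den_exp n : size (den ^+ n) = n.+1.
Proof. by rewrite size_exp_neq0 -?size_poly_eq0 size_linear // mul1n. Qed.

Lemma stirling_moebius :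
  stirling (moebius a b c d) = ('X * den ^+ 3 - num * Q ^+ 2, den ^+ 3).
Proof.
have wronskian : num^`() * den - num * den^`() = 1.
  by rewrite -[1]/(1%:P) -det1 !derivE !(rmorphM, rmorphD, rmorphB) /=; ring.
rewrite /stirling /rf_sub /rf_div /rf_comp /rf_deriv /moebius /rf_id /=.
rewrite wronskian size_den_exp size_poly1 /= big_ord1 !big_ord_recr big_ord0 /=.
have -> : den ^+ 2 = (c ^+ 2)%:P * 'X^2 + (2 * c * d)%:P * 'X + (d ^+ 2)%:P.
  by rewrite !(rmorphM, rmorphXn, rmorph_nat) /=; ring.
rewrite !coefE /= -!mul_polyC !(rmorphM, rmorphD, rmorphXn, rmorph_nat, rmorph0) /=.
by congr pair; ring.
Qed.

Lemma moebius_det_horner z : a * den.[z] - c * num.[z] = 1.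
Proof. by rewrite !hornerE -det1; ring. Qed.

Lemma moebius_Q_pole z : den.[z] = 0 -> Q.[z] = 1.
Proof.
move=> den0; rewrite -(moebius_det_horner z) hornerD hornerN horner_exp hornerCM den0.
by ring.
Qed.

Lemma moebius_Q_root_nonpole z : Q.[z] = 0 -> den.[z] != 0 /\ num.[z] != 0.
Proof.
move=> Q0; have nz_den : den.[z] != 0.
  by apply/eqP => /moebius_Q_pole; rewrite Q0 => /esym/eqP; rewrite oner_eq0.
split=> //; apply/eqP => num0; move/eqP: Q0.
by rewrite hornerD hornerN hornerCM num0 mulr0 subr0 horner_exp expf_eq0 (negbTE nz_den) andbF.
Qed.

Lemma moebius_Q_horner z : 4 * Q.[z] = (2 * c * z - (a - 2 * d)) ^+ 2 - (a ^+ 2 - 4).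
Proof.
have -> : a ^+ 2 - 4 = a ^+ 2 - 4 * (a * d - b * c) by rewrite det1 mulr1.
by rewrite !hornerE; ring.
Qed.

Lemma rf_zero_moebius z : den.[z] != 0 -> rf_zero (moebius a b c d) z <-> num.[z] = 0.
Proof.
move=> nz_den; rewrite /rf_zero rf_eval_nonpole //.
split=> [[/eqP] | ->]; last by rewrite mul0r.
by rewrite mulf_eq0 invr_eq0 (negbTE nz_den) orbF => /eqP.
Qed.

Lemma stirling_moebius_nonpole z : rf_fixed (stirling (moebius a b c d)) z -> den.[z] != 0.
Proof.
apply: contraPneq => den0; rewrite stirling_moebius /rf_fixed rf_eval_id_sub_pole //.
  by rewrite horner_exp den0 expr0n.
rewrite hornerM horner_exp moebius_Q_pole // expr1n mulr1.
apply: contra_eq_neq (moebius_det_horner z) => ->.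
by rewrite den0 !mulr0 subr0 eq_sym oner_neq0.
Qed.

Lemma stirling_moebius_fixed_Qroot z :
  Q.[z] = 0 -> rf_fixed (stirling (moebius a b c d)) z /\ rf_mult (stirling (moebius a b c d)) z = 1.
Proof.
move=> Q0; have [nz_den _] := moebius_Q_root_nonpole Q0.
have nz_den3 : (den ^+ 3).[z] != 0 by rewrite horner_exp expf_neq0.
have N0 : (num * Q ^+ 2).[z] = 0 by rewrite hornerM horner_exp Q0 expr0n mulr0.
rewrite stirling_moebius rf_mult_id_sub // rf_fixed_id_subP //; split=> //.
by rewrite horner_deriv_mul_sqr Q0 expr0n !(mulr0, mul0r, mul0rn, addr0, subr0).
Qed.

Lemma moebius_extraneousP z :
  rf_fixed (stirling (moebius a b c d)) z /\ ~ rf_zero (moebius a b c d) z <-> Q.[z] = 0.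
Proof.
split=> [[fix_z nzero] | Q0].
  have nz_den := stirling_moebius_nonpole fix_z.
  move: fix_z; rewrite stirling_moebius rf_fixed_id_subP ?horner_exp ?expf_neq0 //.
  rewrite hornerM horner_exp => /eqP; rewrite mulf_eq0 expf_eq0 /=.
  by case/orP=> /eqP // num0; case: nzero; apply/rf_zero_moebius.
have [nz_den nz_num] := moebius_Q_root_nonpole Q0.
split; first exact: (stirling_moebius_fixed_Qroot Q0).1.
by move/(rf_zero_moebius nz_den)/eqP; apply/negP.
Qed.

Lemma stirling_moebius_root (nz_a : a != 0) :
  rf_fixed (stirling (moebius a b c d)) (- b / a) /\
  rf_mult (stirling (moebius a b c d)) (- b / a) = 0.
Proof.
have num0 : num.[- b / a] = 0 by rewrite hornerD hornerCM hornerX hornerC; field.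
have den_root : den.[- b / a] = a^-1.
  have := moebius_det_horner (- b / a); rewrite num0 mulr0 subr0 => det.
  by rewrite -[den.[_]](mulKf nz_a) det mulr1.
have Q_root : Q.[- b / a] = a^-2.
  by rewrite hornerD hornerN hornerCM num0 mulr0 subr0 horner_exp den_root exprVn.
have nz_den3 : (den ^+ 3).[- b / a] != 0 by rewrite horner_exp den_root expf_neq0 ?invr_eq0.
have N0 : (num * Q ^+ 2).[- b / a] = 0 by rewrite hornerM num0 mul0r.
rewrite stirling_moebius rf_mult_id_sub // rf_fixed_id_subP //; split=> //.
rewrite horner_deriv_mul_sqr num0 Q_root horner_exp den_root !derivE.
by rewrite !(mul0r, addr0, mul0rn) hornerC; field; rewrite nz_a oner_neq0.
Qed.

Lemma size_stirling_moebius_num (nz_a : a != 0) :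
  size ('X * den ^+ 3 - num * Q ^+ 2) = 6.
Proof.
have size_Q : size Q = 3.
  by rewrite size_polyDl size_den_exp // size_polyN size_Cmul // size_linear.
have nz_Q : Q != 0 by rewrite -size_poly_eq0 size_Q.
have nz_num : num != 0 by rewrite -size_poly_eq0 size_linear.
have size_numQ2 : size (num * Q ^+ 2) = 6.
  by rewrite size_mul ?expf_neq0 // size_exp_neq0 // size_Q size_linear.
rewrite addrC size_polyDl size_polyN // size_numQ2.
by rewrite mulrC size_mulX -?size_poly_eq0 size_den_exp.
Qed.

Lemma stirling_moebius_inf (nz_a : a != 0) :
  rf_fixed_inf (stirling (moebius a b c d)) /\ rf_mult_inf (stirling (moebius a b c d)) = 0.
Proof.
by rewrite stirling_moebius; apply: rf_inf_superattracting; rewrite size_den_exp size_stirling_moebius_num.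
Qed.

Lemma moebius_Q_rootP (nz_2 : (2 : K) != 0) z :
  Q.[z] = 0 <-> exists2 e, e ^+ 2 = a ^+ 2 - 4 & z = ((a - 2 * d) + e) / (2 * c).
Proof.
have nz_4 : (4 : K) != 0 by rewrite (natrM _ 2 2) mulf_neq0.
split=> [Q0 | [e e2 ->]].
  exists (2 * c * z - (a - 2 * d)); last by field; rewrite nz_2 nz_c.
  by apply/eqP; rewrite -subr_eq0 -moebius_Q_horner Q0 mulr0.
apply: (mulfI nz_4); rewrite mulr0 moebius_Q_horner.
suff -> : 2 * c * (((a - 2 * d) + e) / (2 * c)) - (a - 2 * d) = e by rewrite e2 subrr.
by field; rewrite nz_2 nz_c.
Qed.

End MoebiusStirling.

Theorem mainTheorem13 (R : realType) (a b c d : R[i])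
  (ha : a != 0) (hc : c != 0) (hdet : a * d - b * c = 1) :
  let T := moebius a b c d in
  [/\ superattracting_fixed (stirling T) (- b / a),
      (forall s : R[i], s ^+ 2 = a ^+ 2 - 4 ->
         extraneous_fixed T (((a - 2 * d) + s) / (2 * c)) /\
         rationally_indifferent_fixed (stirling T) (((a - 2 * d) + s) / (2 * c)) /\
         extraneous_fixed T (((a - 2 * d) - s) / (2 * c)) /\
         rationally_indifferent_fixed (stirling T) (((a - 2 * d) - s) / (2 * c))),
      (forall z : R[i], extraneous_fixed T z ->
         exists2 s : R[i], s ^+ 2 = a ^+ 2 - 4 & z = ((a - 2 * d) + s) / (2 * c))
    & superattracting_fixed_inf (stirling T)].
Proof.
have nz_2 : (2 : R[i]) != 0 by rewrite pnatr_eq0.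
move=> T; have Qroot_case e : e ^+ 2 = a ^+ 2 - 4 ->
    extraneous_fixed T (((a - 2 * d) + e) / (2 * c)) /\
    rationally_indifferent_fixed (stirling T) (((a - 2 * d) + e) / (2 * c)).
  move=> e2; have Q0 := (moebius_Q_rootP hc hdet nz_2 _).2 (ex_intro2 _ _ e e2 erefl).
  have [fix_z mult1] := stirling_moebius_fixed_Qroot hc hdet Q0.
  split; first exact/(moebius_extraneousP hc hdet).
  by split=> //; exists 0%Q; rewrite mult1 /expi2pi rmorph0 !mulr0 cos0 sin0.
split.
- exact: stirling_moebius_root hc hdet ha.
- move=> e e2; have eN2 : (- e) ^+ 2 = a ^+ 2 - 4 by rewrite sqrrN.
  have [extr_p indiff_p] := Qroot_case e e2.
  by have [extr_m indiff_m] := Qroot_case (- e) eN2.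
- by move=> z /(moebius_extraneousP hc hdet) /(moebius_Q_rootP hc hdet nz_2).
- exact: stirling_moebius_inf hc hdet ha.
Qed.
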